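(* Let $R$ be the subalgebra of $A^\pm_{p|q}$ generated by the elements $\partial_i x_i$, $i\in\{1,\dots,n\}$. Then $R$ is a maximal commutative subalgebra of $A^\pm_{p|q}$.
   Context: $\Bbbk$ is an algebraically closed field of characteristic $0$. Fix integers $p,q\ge 0$, put $n=p+q$, and fix a sign $\pm\in\{+,-\}$. Set $p(i)=0$ for $1\le i\le p$ and $p(i)=1$ for $p<i\le n$. The Clifford/Weyl superalgebra $A^\pm_{p|q}$ is the associative unital superalgebra over $\Bbbk$ generated by $x_i,\partial_i$ ($1\le i\le n$), where $x_i,\partial_i$ have parity $p(i)$, subject to the relations $[\partial_i,x_j]_\pm=\delta_{ij}$, $[x_i,x_j]_\pm=0$, $[\partial_i,\partial_j]_\pm=0$ for all $i,j$, where for homogeneous $a,b$ of parities $p(a),p(b)$ one sets $[a,b]_\pm=ab\pm(-1)^{p(a)p(b)}ba$. *)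

From HB Require Import structures.
From mathcomp Require Import all_boot all_order all_algebra.
Set Implicit Arguments. Unset Strict Implicit. Unset Printing Implicit Defensive.
Import GRing.Theory.
Local Open Scope ring_scope.

(* Parity of the index i : 'I_(p+q) (0-indexed): even for i < p, odd for i >= p. *)
Definition par (p q : nat) (i : 'I_(p + q)) : bool := (p <= i)%N.

(* Super (anti)commutator [a,b]_(+/-) = a b (+/-) (-1)^(pa pb) b a,
   sgn = true encodes "+", sgn = false encodes "-". *)
Definition supbr (K : fieldType) (A : algType K) (sgn : bool) (pa pb : bool)
  (a b : A) : A :=
  a * b + (((if sgn then 1 else -1) * (-1) ^+ (pa && pb)) : K) *: (b * a).

Definition clw_rel (K : fieldType) (A : algType K) (p q : nat) (sgn : bool)
  (x d : 'I_(p + q) -> A) : Prop :=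
  (forall i j, supbr sgn (par i) (par j) (d i) (x j) = (i == j)%:R) /\
  (forall i j, supbr sgn (par i) (par j) (x i) (x j) = 0) /\
  (forall i j, supbr sgn (par i) (par j) (d i) (d j) = 0).

Inductive gen_subalg (K : fieldType) (A : algType K) (S : A -> Prop) : A -> Prop :=
  | gen_base a : S a -> gen_subalg S a
  | gen_one : gen_subalg S 1
  | gen_scale c a : gen_subalg S a -> gen_subalg S (c *: a)
  | gen_add a b : gen_subalg S a -> gen_subalg S b -> gen_subalg S (a + b)
  | gen_mul a b : gen_subalg S a -> gen_subalg S b -> gen_subalg S (a * b).

Definition is_clifford_weyl (K : fieldType) (A : algType K) (p q : nat)
  (sgn : bool) (x d : 'I_(p + q) -> A) : Prop :=
  clw_rel sgn x d /\
  (forall a : A, gen_subalg (fun b => exists i, b = x i \/ b = d i) a) /\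
  (forall (B : algType K) (x' d' : 'I_(p + q) -> B), clw_rel sgn x' d' ->
     exists f : A -> B,
       [/\ forall a b, f (a + b) = f a + f b,
           forall a b, f (a * b) = f a * f b,
           f 1 = 1,
           forall (c : K) a, f (c *: a) = c *: f a &
           forall i, f (x i) = x' i /\ f (d i) = d' i]).

Definition is_subalg (K : fieldType) (A : algType K) (S : A -> Prop) : Prop :=
  [/\ S 1, forall a b, S a -> S b -> S (a + b),
      forall a b, S a -> S b -> S (a * b) &
      forall (c : K) a, S a -> S (c *: a)].

Definition is_commutative (K : fieldType) (A : algType K) (S : A -> Prop) : Prop :=
  forall a b, S a -> S b -> a * b = b * a.

Definition max_comm_subalg (K : fieldType) (A : algType K) (S : A -> Prop) : Prop :=
  [/\ is_subalg S, is_commutative S &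
      forall T : A -> Prop, is_subalg T -> is_commutative T ->
        (forall a, S a -> T a) -> forall a, T a -> S a].

From HB Require Import structures.
From mathcomp Require Import all_boot all_order all_algebra.
From mathcomp Require Import ring zify.
Set Implicit Arguments. Unset Strict Implicit. Unset Printing Implicit Defensive.
Import GRing.Theory.
Local Open Scope ring_scope.

(* R is commutative because the generators of distinct indices supercommute,
   so h_j commutes with x_i and d_i for i <> j.  For maximality, take a in a
   commutative subalgebra containing R; then a lies in the common kernel of
   the derivations ad_j = [h_j, -].  Using the relations, every element of A
   is an R-linear combination of the ordered monomials
   monom w = prod_j P j (w j), w : I -> int, where P j k = x_j^k (k >= 0) or
   d_j^(-k) (k < 0): the span is stable under left multiplication by the
   generators, because a generator normalizes R and skew-commutes with the
   factors of other indices.  Each r * monom w (r in R) is a simultaneous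
   eigenvector of the ad_j with eigenvalues -eps_jj w_j; in characteristic 0
   these all vanish only for w = 0, i.e. monom w = 1.  A general fact on
   simultaneous eigenvectors then shows that a equals the sum of its
   weight-zero components, which lies in R. *)

Section GeneratedSubalgebra.
Variables (K : fieldType) (A : algType K) (S : A -> Prop).

Lemma gen_subalg_is_subalg : is_subalg (gen_subalg S).
Proof. by split; [apply: gen_one | apply: gen_add | apply: gen_mul | apply: gen_scale]. Qed.

Lemma gen_subalg0 : gen_subalg S 0.
Proof. by rewrite -(scale0r 1); apply/gen_scale/gen_one. Qed.

Lemma gen_subalgB a b : gen_subalg S a -> gen_subalg S b -> gen_subalg S (a - b).
Proof. by move=> Sa Sb; rewrite -scaleN1r; apply/gen_add/gen_scale. Qed.

Lemma gen_subalg_comm a :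
  (forall s, S s -> GRing.comm a s) -> forall b, gen_subalg S b -> GRing.comm a b.
Proof.
move=> comm_gen b; elim=> {b} [s /comm_gen //||c b _ IH|b1 b2 _ IH1 _ IH2|b1 b2 _ IH1 _ IH2].
- exact: commr1.
- by rewrite /GRing.comm -scalerAl -scalerAr IH.
- exact: commrD.
- exact: commrM.
Qed.

Lemma gen_subalg_left_stable (M : A -> Prop) :
  (forall a b, M a -> M b -> M (a + b)) -> (forall c a, M a -> M (c *: a)) ->
  (forall s a, S s -> M a -> M (s * a)) ->
  forall b a, gen_subalg S b -> M a -> M (b * a).
Proof.
move=> MD MZ MS b a Sb; elim: Sb a => {b} [s /MS //||c b _ IH|b1 b2 _ IH1 _ IH2|b1 b2 _ IH1 _ IH2] a Ma.
- by rewrite mul1r.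
- by rewrite -scalerAl; apply/MZ/IH.
- by rewrite mulrDl; apply: MD; [apply: IH1 | apply: IH2].
- by rewrite -mulrA; apply/IH1/IH2.
Qed.

End GeneratedSubalgebra.

Section MultiplicativeClosure.
Variables (K : fieldType) (A : algType K) (M : A -> Prop).
Hypotheses (M1 : M 1) (MM : forall a b, M a -> M b -> M (a * b)).

Lemma mul_closedX a m : M a -> M (a ^+ m).
Proof. by move=> Ma; elim: m => [|m IH]; [rewrite expr0 | rewrite exprS; apply: MM]. Qed.

End MultiplicativeClosure.

Section SimultaneousEigenvectors.
Variables (K : fieldType) (V : lmodType K) (J : finType) (f : J -> V -> V).
Hypothesis f_add : forall j u v, f j (u + v) = f j u + f j v.
Hypothesis f_scale : forall j c v, f j (c *: v) = c *: f j v.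
Variables (E : eqType) (v : E -> V) (mu : E -> J -> K).

Local Notation eigen l := (forall t, t \in l -> forall j, f j (v t) = mu t j *: v t).

Lemma f_lincomb j (l : seq E) (c : E -> K) : eigen l ->
  f j (\sum_(t <- l) c t *: v t) = \sum_(t <- l) (c t * mu t j) *: v t.
Proof.
move=> eig; have f0 : f j 0 = 0 by have := f_scale j 0 0; rewrite !scale0r.
rewrite (big_morph (f j) (f_add j) f0) big_seq [RHS]big_seq.
by apply: eq_bigr => t tl; rewrite f_scale eig // scalerA.
Qed.

(* One elimination step: subtracting lm^-1 f_j(s) from s kills all the terms
   with j-th eigenvalue lm. *)
Lemma eliminate_eigenvalue j lm (l : seq E) (c : E -> K) : eigen l -> lm != 0 ->
  f j (\sum_(t <- l) c t *: v t) = 0 ->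
  \sum_(t <- l) c t *: v t =
  \sum_(t <- [seq t <- l | mu t j != lm]) (c t * (lm - mu t j) / lm) *: v t.
Proof.
move=> eig lm0 fs0; rewrite big_filter.
have -> : \sum_(t <- l | mu t j != lm) (c t * (lm - mu t j) / lm) *: v t =
          \sum_(t <- l) (c t * (lm - mu t j) / lm) *: v t.
  rewrite [RHS](bigID (fun t => mu t j != lm)) /= [X in _ = _ + X]big1 ?addr0 //.
  by move=> t /negPn/eqP ->; rewrite subrr mulr0 mul0r scale0r.
have -> : \sum_(t <- l) (c t * (lm - mu t j) / lm) *: v t =
          \sum_(t <- l) c t *: v t - lm^-1 *: f j (\sum_(t <- l) c t *: v t).
  rewrite f_lincomb // scaler_sumr -sumrB; apply: eq_bigr => t _.
  by rewrite !scalerA -scalerBl; congr (_ *: _); field.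
by rewrite fs0 scaler0 subr0.
Qed.

Lemma kernel_component n (l : seq E) (c : E -> K) : (size l <= n)%N -> eigen l ->
  (forall j, f j (\sum_(t <- l) c t *: v t) = 0) ->
  \sum_(t <- l) c t *: v t = \sum_(t <- l | [forall j, mu t j == 0]) c t *: v t.
Proof.
elim: n l c => [|n IH] l c; first by rewrite leqn0 => /nilP -> _ _; rewrite !big_nil.
move=> size_l eig fs0.
have [allZ | /allPn [t0 t0l /forallPn [j mu_t0j]]] :=
  boolP (all (fun t => [forall j, mu t j == 0]) l).
  by rewrite -[RHS]big_filter (all_filterP allZ).
set lm := mu t0 j in mu_t0j; set l' := [seq t <- l | mu t j != lm].
pose c' t := c t * (lm - mu t j) / lm.
have sum_l' := eliminate_eigenvalue eig mu_t0j (fs0 j).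
have size_l' : (size l' <= n)%N.
  have : has (predC (fun t => mu t j != lm)) l by apply/hasP; exists t0; rewrite //= negbK.
  by move: size_l; rewrite size_filter has_count -(count_predC (fun t => mu t j != lm) l); lia.
have eig' : eigen l' by move=> t; rewrite mem_filter => /andP [_ /eig].
rewrite sum_l' (IH l' c' size_l' eig') -?sum_l' // big_filter_cond.
apply: eq_big => t.
  case Z: [forall j, mu t j == 0]; rewrite ?andbF ?andbT //.
  by move/forallP: Z => /(_ j) /eqP ->; rewrite eq_sym.
by move=> /andP [_ /forallP /(_ j) /eqP Z]; rewrite /c' Z subr0 mulfK.
Qed.

End SimultaneousEigenvectors.

Section CliffordWeyl.
Variables (K : fieldType) (p q : nat) (sgn : bool) (A : algType K).
Variables (x d : 'I_(p + q) -> A).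
Hypothesis hrel : clw_rel sgn x d.
Local Notation I := 'I_(p + q).

Definition eps (i j : I) : K := (if sgn then 1 else -1) * (-1) ^+ (par i && par j).

Lemma eps_sq i j : eps i j * eps i j = 1.
Proof. by rewrite /eps; case: sgn; case: (par i && par j); rewrite ?expr0 ?expr1; ring. Qed.

Lemma eps_sym i j : eps i j = eps j i.
Proof. by rewrite /eps andbC. Qed.

Lemma eps_neq0 i j : eps i j != 0.
Proof. by apply/eqP => eps0; move: (eps_sq i j); rewrite eps0 mul0r => /eqP; rewrite eq_sym oner_eq0. Qed.

Lemma rel_dx i j : d i * x j + eps i j *: (x j * d i) = (i == j)%:R.
Proof. by case: hrel => rel _; apply: rel. Qed.

Lemma rel_xx i j : x i * x j + eps i j *: (x j * x i) = 0.
Proof. by case: hrel => _ [rel _]; apply: rel. Qed.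

Lemma rel_dd i j : d i * d j + eps i j *: (d j * d i) = 0.
Proof. by case: hrel => _ [_ rel]; apply: rel. Qed.

Lemma addr_scale_eq0 (a b : A) (c : K) : a + c *: b = 0 -> a = - c *: b.
Proof. by move=> ab0; apply/eqP; rewrite scaleNr -addr_eq0 ab0. Qed.

Definition gen (b : bool) (i : I) : A := if b then x i else d i.

Lemma gen_supercomm b b' i j : i != j ->
  gen b i * gen b' j = - eps i j *: (gen b' j * gen b i).
Proof.
move=> neq_ij; case: b; case: b' => /=.
- exact/addr_scale_eq0/rel_xx.
- have := rel_dx j i; rewrite eq_sym (negbTE neq_ij) => /addr_scale_eq0 dx.
  rewrite -[x i * d j]scale1r -(eps_sq j i) -scalerA.
  by rewrite -[eps j i *: (x i * d j)]opprK -scaleNr -dx scalerN -scaleNr eps_sym.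
- by apply: addr_scale_eq0; rewrite rel_dx (negbTE neq_ij).
- exact/addr_scale_eq0/rel_dd.
Qed.

Definition h (i : I) : A := d i * x i.

(* h_j commutes with the generators of other indices (two sign changes). *)
Lemma h_gen_comm b i j : i != j -> GRing.comm (h j) (gen b i).
Proof.
move=> neq_ij; rewrite eq_sym in neq_ij.
have xg := gen_supercomm true b neq_ij; have dg := gen_supercomm false b neq_ij.
rewrite /= in xg dg; rewrite /GRing.comm /h -mulrA xg -scalerAr (mulrA (d j)) dg.
by rewrite -scalerAl scalerA mulrNN eps_sq scale1r mulrA.
Qed.

Lemma h_comm i j : GRing.comm (h i) (h j).
Proof.
have [-> // | neq_ij] := eqVneq i j.
rewrite eq_sym in neq_ij.
by apply: commrM; [apply: (h_gen_comm false) | apply: (h_gen_comm true)].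
Qed.

Lemma xd i : x i * d i = eps i i *: (1 - h i).
Proof.
have := rel_dx i i; rewrite eqxx mulr1n => <-.
by rewrite /h [d i * x i + _]addrC addrK scalerA eps_sq scale1r.
Qed.

Definition Rsub : A -> Prop := gen_subalg (fun a => exists i, a = h i).

Lemma Rsub_h i : Rsub (h i). Proof. by apply: gen_base; exists i. Qed.

Lemma Rsub_1h c i : Rsub (1 - c *: h i).
Proof. by apply: gen_subalgB; [apply: gen_one | apply/gen_scale/Rsub_h]. Qed.

Lemma Rsub_comm_h j r : Rsub r -> GRing.comm (h j) r.
Proof. by apply: gen_subalg_comm => _ [i ->]; apply: h_comm. Qed.

Lemma Rsub_commutative : is_commutative Rsub.
Proof.
move=> a b Ra; apply: gen_subalg_comm => _ [j ->].
exact/commr_sym/Rsub_comm_h.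
Qed.

Definition normalizes_R (a : A) : Prop :=
  forall r, Rsub r -> exists2 r', Rsub r' & a * r = r' * a.

Lemma normalizes_R1 : normalizes_R 1.
Proof. by move=> r Rr; exists r; rewrite ?mul1r ?mulr1. Qed.

Lemma normalizes_RM a b : normalizes_R a -> normalizes_R b -> normalizes_R (a * b).
Proof.
move=> Na Nb r /Nb [r1 /Na [r2 R2 E2] E1]; exists r2 => //.
by rewrite -mulrA E1 mulrA E2 mulrA.
Qed.

Lemma xh i : x i * h i = (eps i i *: (1 - h i)) * x i.
Proof. by rewrite /h mulrA xd. Qed.

Lemma hd i : h i * d i = eps i i *: (d i - d i * h i).
Proof. by rewrite {1}/h -mulrA xd -scalerAr mulrBr mulr1. Qed.

Lemma dh i : d i * h i = (1 - eps i i *: h i) * d i.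
Proof.
by rewrite mulrBl mul1r -scalerAl hd scalerA eps_sq scale1r opprB addrC subrK.
Qed.

(* Each generator normalizes R: moving it to the right of h_i only changes
   h_i into 1 - h_i up to a sign. *)
Lemma gen_normalizes_R b i : normalizes_R (gen b i).
Proof.
move=> r; elim=> {r} [_ [j ->]||c r _ [r' R' E]|r1 r2 _ [r1' R1 E1] _ [r2' R2 E2]|
                    r1 r2 _ [r1' R1 E1] _ [r2' R2 E2]].
- have [<- | neq_ij] := eqVneq i j; last first.
    by exists (h j); [apply: Rsub_h | apply/esym/h_gen_comm].
  case: b => /=; last by exists (1 - eps i i *: h i); [apply: Rsub_1h | apply: dh].
  exists (eps i i *: (1 - h i)); last exact: xh.
  by apply: gen_scale; rewrite -[h i]scale1r; apply: Rsub_1h.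
- by exists 1; [apply: gen_one | rewrite mulr1 mul1r].
- by exists (c *: r'); [apply: gen_scale | rewrite -scalerAr E scalerAl].
- by exists (r1' + r2'); [apply: gen_add | rewrite mulrDr E1 E2 mulrDl].
- by exists (r1' * r2'); [apply: gen_mul | rewrite mulrA E1 -mulrA E2 mulrA].
Qed.

Definition skew (g a : A) : Prop := exists c : K, g * a = c *: (a * g).

Lemma skew1 g : skew g 1.
Proof. by exists 1; rewrite mulr1 mul1r scale1r. Qed.

Lemma skewM g a b : skew g a -> skew g b -> skew g (a * b).
Proof.
move=> [c ga] [c' gb]; exists (c * c').
by rewrite mulrA ga -scalerAl -(mulrA a g) gb -scalerAr scalerA mulrA.
Qed.

(* The monomials of the normal form: for k >= 0, P i k = x_i^k; for k < 0,
   P i k = d_i^(-k).  A weight w : I -> int gives the ordered product of the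
   P j (w j). *)
Definition P (i : I) (k : int) : A :=
  match k with Posz m => x i ^+ m | Negz m => d i ^+ m.+1 end.

Definition monom_seq (s : seq I) (w : I -> int) : A := \prod_(j <- s) P j (w j).

Definition monom (w : I -> int) : A := monom_seq (enum I) w.

(* The weight change caused by multiplying with x_i (b = true) or d_i. *)
Definition step (b : bool) : int := if b then 1 else -1.

Definition upd (w : {ffun I -> int}) (i : I) (b : bool) : {ffun I -> int} :=
  [ffun j => if j == i then w j + step b else w j].

Lemma P_normalizes_R i k : normalizes_R (P i k).
Proof.
have closedX := mul_closedX normalizes_R1 normalizes_RM.
by case: k => m; apply: closedX; [apply: (gen_normalizes_R true) | apply: (gen_normalizes_R false)].
Qed.

Lemma monom_seq_normalizes_R s w : normalizes_R (monom_seq s w).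
Proof. by apply: (big_ind _ normalizes_R1 normalizes_RM) => j _; apply: P_normalizes_R. Qed.

Lemma P_skew b i j k : i != j -> skew (gen b i) (P j k).
Proof.
move=> neq_ij; have closedX := mul_closedX (skew1 (gen b i)) (@skewM _).
by case: k => m; apply: closedX; eexists;
  [apply: (gen_supercomm b true neq_ij) | apply: (gen_supercomm b false neq_ij)].
Qed.

Lemma monom_seq_skew b i s w : i \notin s -> skew (gen b i) (monom_seq s w).
Proof.
move=> i_s; rewrite /monom_seq big_seq.
apply: (big_ind _ (skew1 _) (@skewM _)) => j j_s; apply: P_skew.
by apply: contraNneq i_s => ->.
Qed.

Lemma monom_seq_eq s (w w' : I -> int) : {in s, w =1 w'} -> monom_seq s w = monom_seq s w'.
Proof. by move=> ww'; apply: eq_big_seq => j /ww' ->. Qed.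

Lemma gen_P b i k : exists2 r, Rsub r & gen b i * P i k = r * P i (k + step b).
Proof.
case: b; case: k => m.
- exists 1; first exact: gen_one.
  by rewrite mul1r (_ : Posz m + 1 = Posz m.+1) /= ?exprS //; lia.
- exists (eps i i *: (1 - h i)).
    by apply: gen_scale; rewrite -[h i]scale1r; apply: Rsub_1h.
  rewrite /= exprS mulrA xd; case: m => [|m].
    by rewrite (_ : Negz 0 + 1 = Posz 0) /= ?expr0 //; lia.
  by rewrite (_ : Negz m.+1 + 1 = Negz m) //; lia.
- case: m => [|m].
    exists 1; first exact: gen_one.
    by rewrite (_ : Posz 0 - 1 = Negz 0) /= ?expr1 ?expr0 ?mulr1 ?mul1r //; lia.
  exists (h i); first exact: Rsub_h.
  by rewrite (_ : Posz m.+1 - 1 = Posz m) /= ?exprS ?mulrA //; lia.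
- exists 1; first exact: gen_one.
  by rewrite (_ : Negz m - 1 = Negz m.+1) /= ?mul1r -?exprS //; lia.
Qed.

Lemma monom_split i : exists s1 s2, [/\ i \notin s1, i \notin s2 &
  forall w, monom w = monom_seq s1 w * (P i (w i) * monom_seq s2 w)].
Proof.
rewrite /monom; have := enum_uniq I; have : i \in enum I by rewrite mem_enum.
case/splitPr => s1 s2; rewrite cat_uniq /= negb_or => /and3P [_ /andP [i_s1 _] /andP [i_s2 _]].
by exists s1, s2; split => // w; rewrite /monom_seq big_cat big_cons.
Qed.

Lemma gen_monom b i (w : {ffun I -> int}) :
  exists2 r, Rsub r & gen b i * monom w = r * monom (upd w i b).
Proof.
have [s1 [s2 [i_s1 i_s2 split]]] := monom_split i.
have [c gM1] := monom_seq_skew b w i_s1.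
have [r Rr gP] := gen_P b i (w i).
have [r' Rr' M1r] := monom_seq_normalizes_R s1 w Rr.
have upd_out s : i \notin s -> monom_seq s (upd w i b) = monom_seq s w.
  move=> i_s; apply: monom_seq_eq => j j_s; rewrite ffunE.
  by case: eqP j_s i_s => // -> ->.
exists (c *: r'); first exact: gen_scale.
rewrite !split !upd_out // ffunE eqxx mulrA gM1 -scalerAl -!mulrA (mulrA (gen b i)) gP.
by rewrite -mulrA (mulrA (monom_seq s1 w) r) M1r -scalerAl !mulrA.
Qed.

Definition R_span (a : A) : Prop := exists l : seq (A * {ffun I -> int}),
  (forall t, t \in l -> Rsub t.1) /\ a = \sum_(t <- l) t.1 * monom t.2.

Lemma R_span_add a b : R_span a -> R_span b -> R_span (a + b).
Proof.
move=> [l1 [R1 ->]] [l2 [R2 ->]]; exists (l1 ++ l2); split; last by rewrite big_cat.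
by move=> t; rewrite mem_cat => /orP [/R1 | /R2].
Qed.

Lemma R_span_scale c a : R_span a -> R_span (c *: a).
Proof.
move=> [l [Rl ->]]; exists [seq (c *: t.1, t.2) | t <- l]; split.
  by move=> t /mapP [t' /Rl Rt' ->]; apply: gen_scale.
by rewrite big_map scaler_sumr; apply: eq_bigr => t _; rewrite scalerAl.
Qed.

Lemma R_span_gen b i a : R_span a -> R_span (gen b i * a).
Proof.
move=> [l [Rl ->]]; elim: l Rl => [|t l IH] Rl.
  by rewrite big_nil mulr0; exists [::]; rewrite big_nil.
rewrite big_cons mulrDr; apply: R_span_add; last first.
  by apply: IH => t' t'l; apply: Rl; rewrite inE t'l orbT.
have [r1 R1 E1] := gen_normalizes_R b i (Rl t (mem_head t l)).
have [r2 R2 E2] := gen_monom b i t.2.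
exists [:: (r1 * r2, upd t.2 i b)]; split; last first.
  by rewrite big_seq1 mulrA E1 -mulrA E2 mulrA.
by move=> t'; rewrite inE => /eqP -> /=; apply: gen_mul.
Qed.

Lemma monom0 : monom [ffun => 0] = 1.
Proof. by rewrite /monom /monom_seq big1_seq // => j _; rewrite ffunE. Qed.

Lemma R_span_all : (forall a, gen_subalg (fun b => exists i, b = x i \/ b = d i) a) ->
  forall a, R_span a.
Proof.
move=> gen_all a; rewrite -[a]mulr1.
apply: (gen_subalg_left_stable R_span_add R_span_scale _ (gen_all a)).
- by move=> _ b [i [-> | ->]]; [apply: (R_span_gen true) | apply: (R_span_gen false)].
- exists [:: (1, [ffun => 0])]; split; last by rewrite big_seq1 monom0 mulr1.
  by move=> t; rewrite inE => /eqP ->; apply: gen_one.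
Qed.

Definition ad (j : I) (a : A) : A := h j * a - a * h j.

Lemma ad_add j a b : ad j (a + b) = ad j a + ad j b.
Proof. by rewrite /ad mulrDr mulrDl opprD addrACA. Qed.

Lemma ad_scale j c a : ad j (c *: a) = c *: ad j a.
Proof. by rewrite /ad -scalerAr -scalerAl scalerBr. Qed.

Lemma ad_mul j a b : ad j (a * b) = ad j a * b + a * ad j b.
Proof. by rewrite /ad mulrBl mulrBr !mulrA addrA subrK. Qed.

Lemma ad_comm j a : GRing.comm (h j) a -> ad j a = 0.
Proof. by rewrite /ad => ->; rewrite subrr. Qed.

Lemma ad_x i : ad i (x i) = - eps i i *: x i.
Proof.
have hx : eps i i *: (h i * x i) = - (h i * x i).
  by apply/eqP; rewrite -addr_eq0 addrC /h -mulrA scalerAr -mulrDr rel_xx mulr0.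
by rewrite /ad xh -scalerAl mulrBl mul1r scalerBr hx opprK opprD addrC subrK scaleNr.
Qed.

Lemma ad_d i : ad i (d i) = eps i i *: d i.
Proof.
have dh' : eps i i *: (d i * h i) = - (d i * h i).
  by apply/eqP; rewrite -addr_eq0 addrC /h mulrA scalerAl -mulrDl rel_dd mul0r.
by rewrite /ad hd scalerBr dh' opprK addrK.
Qed.

Lemma ad_expr j a c m : ad j a = c *: a -> ad j (a ^+ m) = (m%:R * c) *: a ^+ m.
Proof.
move=> ad_a; elim: m => [|m IH]; first by rewrite expr0 ad_comm ?mul0r ?scale0r //; apply: commr1.
by rewrite exprSr ad_mul IH ad_a -scalerAl -scalerAr -scalerDl -natr1 mulrDl mul1r.
Qed.

Definition weight (i : I) (k : int) : K := - eps i i * k%:~R.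

Lemma ad_P i k : ad i (P i k) = weight i k *: P i k.
Proof.
rewrite /weight; case: k => m /=.
  by rewrite (ad_expr _ (ad_x i)) mulrC.
by rewrite (ad_expr _ (ad_d i)) NegzE intrN mulrN mulNr opprK mulrC.
Qed.

Lemma monom_seq_comm_h j s w : j \notin s -> GRing.comm (h j) (monom_seq s w).
Proof.
move=> j_s; rewrite /monom_seq big_seq; apply: commr_prod => i i_s.
have neq_ij : i != j by apply: contraNneq j_s => <-.
by case: (w i) => m; apply: commrX; [apply: (h_gen_comm true) | apply: (h_gen_comm false)].
Qed.

Lemma ad_monom j w : ad j (monom w) = weight j (w j) *: monom w.
Proof.
have [s1 [s2 [j_s1 j_s2 ->]]] := monom_split j.
rewrite !ad_mul (ad_comm (monom_seq_comm_h w j_s1)) (ad_comm (monom_seq_comm_h w j_s2)).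
by rewrite ad_P mulr0 mul0r addr0 add0r -scalerAl -scalerAr.
Qed.

Lemma weight_eq0 (hK : [pchar K] =i pred0) j k : weight j k = 0 -> k = 0.
Proof.
move/eqP; rewrite /weight mulf_eq0 oppr_eq0 (negbTE (eps_neq0 j j)) /=.
case: k => m; first by rewrite (pcharf0P K).1 // => /eqP ->.
by rewrite NegzE intrN oppr_eq0 (pcharf0P K).1.
Qed.

Lemma Rsub_maximal : [pchar K] =i pred0 ->
  (forall a, gen_subalg (fun b => exists i, b = x i \/ b = d i) a) ->
  max_comm_subalg Rsub.
Proof.
move=> hK gen_all; split; [exact: gen_subalg_is_subalg | exact: Rsub_commutative |].
move=> T _ commT R_T a Ta.
have ad_a j : ad j a = 0 by apply/ad_comm/commT => //; apply/R_T/Rsub_h.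
have [l [Rl a_sum]] := R_span_all gen_all a; subst a.
pose v (t : A * {ffun I -> int}) := t.1 * monom t.2.
pose mu (t : A * {ffun I -> int}) j := weight j (t.2 j).
have eig t : t \in l -> forall j, ad j (v t) = mu t j *: v t.
  move=> /Rl Rt j; rewrite /v ad_mul ad_monom ad_comm ?mul0r ?add0r ?scalerAr //.
  exact: Rsub_comm_h.
have sum_v : \sum_(t <- l) t.1 * monom t.2 = \sum_(t <- l) 1 *: v t.
  by apply: eq_bigr => t _; rewrite scale1r.
rewrite sum_v in ad_a *; rewrite (kernel_component ad_add ad_scale (leqnn _) eig ad_a).
rewrite big_seq_cond; apply: big_ind => [|? ? ? ?|t /andP [/Rl Rt zero]].
- exact: gen_subalg0.
- exact: gen_add.
case: t Rt zero => r w /= Rr zero.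
have -> : w = [ffun => 0].
  by apply/ffunP => j; rewrite ffunE; apply: (weight_eq0 hK); apply/eqP/(forallP zero j).
by rewrite scale1r /v monom0 mulr1.
Qed.

End CliffordWeyl.

Theorem mainTheorem1 (K : closedFieldType) (hK : [pchar K] =i pred0)
  (p q : nat) (sgn : bool) (A : algType K) (x d : 'I_(p + q) -> A)
  (hA : is_clifford_weyl sgn x d) :
  max_comm_subalg (gen_subalg (fun b => exists i, b = d i * x i)).
Proof.
have [rel [gen_all _]] := hA.
exact: Rsub_maximal rel hK gen_all.
Qed.
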